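(* Let $d\ge1$, $s>0$. Suppose that to every $n\in\mathbb{N}_0$ and every cube $Q\subset\mathbb{R}^d$ there is associated a number $E_n(Q)\ge 0$ such that: (i) $E_n(\lambda Q)=\lambda^{-2s}E_n(Q)$ for all $\lambda>0$; (ii) $E_n(Q+\mathbf{x})=E_n(Q)$ for all $\mathbf{x}\in\mathbb{R}^d$; (iii) for any finite collection of disjoint cubes $Q_1,\dots,Q_J$ whose union is a cube, $E_n(\bigcup_j Q_j)\ge \min\{\sum_{j=1}^J E_{n_j}(Q_j): (n_j)\in\mathbb{N}_0^J,\ \sum_j n_j=n\}$; (iv) there exists $q\ge 0$ such that $E_n(Q)>0$ for all $n\ge q$ and all cubes $Q$. Then there is a constant $C>0$ independent of $n$ and $Q$ such that $E_n(Q)\ge C|Q|^{-2s/d}n^{1+2s/d}$ for all integers $n\ge q$ and all cubes $Q$.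
   Context: Cubes are (axis-parallel) cubes in $\mathbb{R}^d$; $\lambda Q$ denotes the dilated cube, $|Q|$ its volume. Disjointness of cubes is understood up to boundaries (measure-zero overlaps). *)

From Stdlib Require Import Reals Lra.
Open Scope R_scope.

(* Points of R^d are represented as functions nat -> R; only coordinates
   i < d are meaningful. A cube is given by its lower corner a and its side
   length l (> 0): the closed cube  prod_{i<d} [a i, a i + l]. *)
Definition point := nat -> R.

Definition in_cube (d : nat) (a : point) (l : R) (x : point) : Prop :=
  forall i, (i < d)%nat -> a i <= x i <= a i + l.

Definition in_cube_int (d : nat) (a : point) (l : R) (x : point) : Prop :=
  forall i, (i < d)%nat -> a i < x i < a i + l.

(* Corner of the dilated cube lambda*Q (dilation about the centre of Q);
   its side is lambda * l. *)
Definition dil_corner (a : point) (l lam : R) : point :=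
  fun i => a i + l / 2 - lam * l / 2.

Definition tr_corner (a x : point) : point := fun i => a i + x i.

Fixpoint rsum (f : nat -> R) (J : nat) : R :=
  match J with O => 0 | S J' => rsum f J' + f J' end.

Fixpoint nsum (f : nat -> nat) (J : nat) : nat :=
  match J with O => O | S J' => (nsum f J' + f J')%nat end.

(* Q_1..Q_J (corners as j, sides ls j, j < J) are pairwise disjoint up to
   boundaries (disjoint interiors) and their union is the cube Q = (a,l). *)
Definition cube_partition (d : nat) (J : nat) (as_ : nat -> point) (ls : nat -> R)
    (a : point) (l : R) : Prop :=
  (forall j, (j < J)%nat -> 0 < ls j) /\
  (forall j k x, (j < J)%nat -> (k < J)%nat -> j <> k ->
       ~ (in_cube_int d (as_ j) (ls j) x /\ in_cube_int d (as_ k) (ls k) x)) /\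
  (forall x, in_cube d a l x <-> exists j, (j < J)%nat /\ in_cube d (as_ j) (ls j) x).

From Stdlib Require Import Reals Lra Lia Arith FunctionalExtensionality.
Open Scope R_scope.

(* By scaling and translation, [E n a l = l^(-2s) * e n] with [e n] the value on
   the unit cube. Cutting the unit cube into [M = 2^d] cubes of side 1/2 gives
   [e n >= K * sum_j e (n_j)] with [sum_j n_j = n] and [K = 2^(2s) = M^alpha],
   [alpha = 2s/d]. One then shows [e n >= c n^(1+alpha)] by strong induction:
   the convex function [x^(1+alpha)] lies above its tangent line at [m = n/M],
   and summing the tangent lines over the parts gives exactly [c m^alpha n =
   c n^(1+alpha) / K]. Parts with [n_j < q], about which nothing is known, are
   harmless because the tangent line is negative there once [n] is large; the
   finitely many small [n] are handled by taking [c] small. *)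

Lemma ln_ge_1_minus_inv (y : R) : 0 < y -> 1 - / y <= ln y.
Proof.
  intros Hy.
  pose proof (exp_ineq1_le (ln (/ y))) as H.
  rewrite exp_ln, ln_Rinv in H by (try apply Rinv_0_lt_compat; lra).
  lra.
Qed.

(* Convexity of [x |-> x^(1+a)] on [0, +oo), as the tangent line at [m]. *)
Lemma Rpower_tangent_line (x m a : R) : 0 <= x -> 0 < m -> 0 <= a ->
  Rpower m a * ((1 + a) * x - a * m) <= x * Rpower x a.
Proof.
  intros Hx Hm Ha.
  assert (Hma : 0 < Rpower m a) by apply exp_pos.
  destruct (Req_dec x 0) as [->|Hx0].
  { assert (0 <= a * m) by nra. nra. }
  assert (Hy : 0 < x / m) by (apply Rdiv_lt_0_compat; lra).
  assert (Hsplit : Rpower x a = Rpower m a * Rpower (x / m) a).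
  { rewrite Rpower_mult_distr by lra. f_equal. field. lra. }
  assert (Hbern : 1 + a * (1 - m / x) <= Rpower (x / m) a).
  { pose proof (ln_ge_1_minus_inv _ Hy) as Hln.
    rewrite Rinv_div in Hln.
    pose proof (exp_ineq1_le (a * ln (x / m))).
    assert (a * (1 - m / x) <= a * ln (x / m)) by (apply Rmult_le_compat_l; lra).
    unfold Rpower. lra. }
  replace ((1 + a) * x - a * m) with (x * (1 + a * (1 - m / x))) by (field; lra).
  rewrite Hsplit.
  assert (0 < x * Rpower m a) by (apply Rmult_lt_0_compat; lra).
  nra.
Qed.

Lemma Rpower_inv_scaling (b x t : R) (d : nat) : 0 < b -> 0 < x ->
  Rpower (/ b) (- (INR d * t)) * Rpower (x / b ^ d) t = Rpower x t.
Proof.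
  intros Hb Hx.
  unfold Rpower. rewrite <- exp_plus. f_equal.
  unfold Rdiv. rewrite ln_mult, !ln_Rinv, ln_pow by (try apply Rinv_0_lt_compat; try apply pow_lt; lra).
  ring.
Qed.

Lemma Rpower_inv_opp_gt_1 (b t : R) : 1 < b -> 0 < t -> 1 < Rpower (/ b) (- t).
Proof.
  intros Hb Ht.
  assert (Hln : 0 < ln b) by (rewrite <- ln_1; apply ln_increasing; lra).
  unfold Rpower. rewrite ln_Rinv, <- exp_0 by lra.
  apply exp_increasing. nra.
Qed.

Lemma finite_pos_lower_bound (r : nat -> R) (p N : nat) :
  (forall n, (p <= n <= N)%nat -> 0 < r n) ->
  exists c, 0 < c /\ forall n, (p <= n <= N)%nat -> c <= r n.
Proof.
  induction N as [|N IH]; intros Hr.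
  - destruct p as [|p].
    + exists (r 0%nat). split; [apply Hr; lia|].
      intros n Hn. replace n with 0%nat by lia. lra.
    + exists 1. split; [lra | intros; lia].
  - destruct IH as [c [Hc Hle]]; [intros; apply Hr; lia|].
    destruct (le_lt_dec p (S N)) as [HpN|HNp].
    + exists (Rmin c (r (S N))). split; [apply Rmin_glb_lt; auto; apply Hr; lia|].
      intros n Hn. destruct (Nat.eq_dec n (S N)) as [->|Hne]; [apply Rmin_r|].
      eapply Rle_trans; [apply Rmin_l | apply Hle; lia].
    + exists c. split; [exact Hc | intros; lia].
Qed.

Lemma rsum_le (f g : nat -> R) (J : nat) :
  (forall j, (j < J)%nat -> f j <= g j) -> rsum f J <= rsum g J.
Proof.
  induction J as [|J IH]; simpl; intros H; [lra|].
  pose proof (H J ltac:(lia)).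
  assert (rsum f J <= rsum g J) by (apply IH; intros; apply H; lia).
  lra.
Qed.

Lemma rsum_nonneg (f : nat -> R) (J : nat) :
  (forall j, (j < J)%nat -> 0 <= f j) -> 0 <= rsum f J.
Proof.
  intros H. replace 0 with (rsum (fun _ => 0) J).
  - apply rsum_le, H.
  - induction J; simpl; [reflexivity | rewrite IHJ by (intros; apply H; lia); ring].
Qed.

Lemma rsum_term_le (f : nat -> R) (J j : nat) :
  (forall j, (j < J)%nat -> 0 <= f j) -> (j < J)%nat -> f j <= rsum f J.
Proof.
  induction J as [|J IH]; simpl; intros H Hj; [lia|].
  assert (0 <= rsum f J) by (apply rsum_nonneg; intros; apply H; lia).
  destruct (Nat.eq_dec j J) as [->|Hne]; [lra|].
  assert (f j <= rsum f J) by (apply IH; [intros; apply H|]; lia).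
  pose proof (H J ltac:(lia)). lra.
Qed.

Lemma rsum_scal (k : R) (f : nat -> R) (J : nat) :
  rsum (fun j => k * f j) J = k * rsum f J.
Proof. induction J; simpl; [ring | rewrite IHJ; ring]. Qed.

Lemma rsum_affine (A B : R) (ns : nat -> nat) (J : nat) :
  rsum (fun j => A * INR (ns j) + B) J = A * INR (nsum ns J) + B * INR J.
Proof.
  induction J as [|J IH]; cbn [rsum nsum]; [simpl; ring|].
  rewrite IH, plus_INR, S_INR. ring.
Qed.

Lemma nsum_term_le (ns : nat -> nat) (J j : nat) :
  (j < J)%nat -> (ns j <= nsum ns J)%nat.
Proof.
  induction J as [|J IH]; simpl; intros Hj; [lia|].
  destruct (Nat.eq_dec j J) as [->|Hne]; [lia|].
  specialize (IH ltac:(lia)). lia.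
Qed.

Lemma growth_bound_upto (e : nat -> R) (q N : nat) (a : R) :
  (forall n, (q <= n)%nat -> 0 < e n) ->
  exists c, 0 < c /\ forall n, (q <= n <= N)%nat ->
    c * (INR n * Rpower (INR n) a) <= e n.
Proof.
  intros He.
  set (g := fun n => INR n * Rpower (INR n) a).
  assert (Hg : forall n, 0 <= g n).
  { intros n. apply Rmult_le_pos; [apply pos_INR | left; apply exp_pos]. }
  destruct (finite_pos_lower_bound (fun n => e n / (g n + 1)) q N) as [c [Hc Hle]].
  { intros n Hn. apply Rdiv_lt_0_compat; [apply He; lia | pose proof (Hg n); lra]. }
  exists c. split; [exact Hc|]. intros n Hn.
  specialize (Hle n Hn). pose proof (Hg n). fold (g n).
  apply Rmult_le_compat_r with (r := g n + 1) in Hle; [|lra].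
  unfold Rdiv in Hle. rewrite Rmult_assoc, Rinv_l, Rmult_1_r in Hle; [nra | lra].
Qed.

Lemma tangent_minorant (ek c m a : R) (k q : nat) :
  0 < c -> 0 < m -> 0 <= a -> (1 + a) * INR q <= a * m -> 0 <= ek ->
  ((q <= k)%nat -> c * (INR k * Rpower (INR k) a) <= ek) ->
  c * (Rpower m a * ((1 + a) * INR k - a * m)) <= ek.
Proof.
  intros Hc Hm Ha Hqm Hek Hbound.
  destruct (le_lt_dec q k) as [Hqk|Hkq].
  - eapply Rle_trans; [|exact (Hbound Hqk)].
    apply Rmult_le_compat_l; [lra|].
    apply Rpower_tangent_line; [apply pos_INR | lra | lra].
  - assert (INR k <= INR q) by (apply le_INR; lia).
    assert (0 < Rpower m a) by apply exp_pos.
    assert (0 < c * Rpower m a) by (apply Rmult_lt_0_compat; lra).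
    assert ((1 + a) * INR k - a * m <= 0) by nra.
    rewrite <- Rmult_assoc. nra.
Qed.

Section SuperadditiveGrowth.

Variables (e : nat -> R) (q M : nat) (a K : R).
Hypothesis Ha : 0 < a.
Hypothesis HM : (1 <= M)%nat.
Hypothesis HK : 1 < K.
Hypothesis HKM : forall x, 0 < x -> K * Rpower (x / INR M) a = Rpower x a.
Hypothesis He0 : forall n, 0 <= e n.
Hypothesis Hepos : forall n, (q <= n)%nat -> 0 < e n.
Hypothesis Hsplit : forall n, exists ns,
  nsum ns M = n /\ K * rsum (fun j => e (ns j)) M <= e n.

Lemma superadditive_parts_lt (n : nat) (ns : nat -> nat) :
  (q <= n)%nat -> nsum ns M = n -> K * rsum (fun j => e (ns j)) M <= e n ->
  forall j, (j < M)%nat -> (ns j < n)%nat.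
Proof.
  intros Hqn Hns Hsum j Hj.
  (* A part equal to [n] would give [e n >= K * e n > e n]. *)
  pose proof (nsum_term_le ns M j Hj) as Hle. rewrite Hns in Hle.
  destruct (Nat.eq_dec (ns j) n) as [Heq|]; [exfalso | lia].
  pose proof (rsum_term_le (fun j => e (ns j)) M j (fun j _ => He0 (ns j)) Hj) as Ht.
  simpl in Ht. rewrite Heq in Ht.
  pose proof (Hepos n Hqn). nra.
Qed.

Lemma superadditive_step (c : R) (n : nat) (ns : nat -> nat) :
  0 < c -> (0 < n)%nat -> (1 + a) * INR q * INR M <= a * INR n ->
  nsum ns M = n -> K * rsum (fun j => e (ns j)) M <= e n ->
  (forall j, (j < M)%nat -> (q <= ns j)%nat ->
     c * (INR (ns j) * Rpower (INR (ns j)) a) <= e (ns j)) ->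
  c * (INR n * Rpower (INR n) a) <= e n.
Proof.
  intros Hc Hn Hqn Hns Hsum Hparts.
  assert (HMr : 0 < INR M) by (apply lt_0_INR; lia).
  assert (Hnr : 0 < INR n) by (apply lt_0_INR; lia).
  set (m := INR n / INR M).
  assert (Hm : 0 < m) by (apply Rdiv_lt_0_compat; lra).
  assert (HmM : m * INR M = INR n) by (unfold m; field; lra).
  assert (Hqm : (1 + a) * INR q <= a * m).
  { apply Rmult_le_reg_r with (INR M); [exact HMr|].
    replace (a * m * INR M) with (a * INR n) by (rewrite <- HmM; ring). lra. }
  set (P := Rpower m a).
  assert (Htangent_sum :
    rsum (fun j => (c * P * (1 + a)) * INR (ns j) + - (c * P * a * m)) M
      <= rsum (fun j => e (ns j)) M).
  { apply rsum_le. intros j Hj.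
    pose proof (tangent_minorant (e (ns j)) c m a (ns j) q Hc Hm ltac:(lra) Hqm
                  (He0 (ns j)) (Hparts j Hj)) as Ht.
    fold P in Ht. nra. }
  rewrite rsum_affine, Hns in Htangent_sum.
  replace (c * P * (1 + a) * INR n + - (c * P * a * m) * INR M)
    with (c * P * INR n) in Htangent_sum by (rewrite <- HmM; ring).
  rewrite <- (HKM (INR n) Hnr). fold m P.
  nra.
Qed.

Lemma superadditive_growth :
  exists c, 0 < c /\ forall n, (q <= n)%nat -> c * (INR n * Rpower (INR n) a) <= e n.
Proof.
  destruct (INR_unbounded ((1 + a) * INR q * INR M / a)) as [N HN].
  destruct (growth_bound_upto e q N a Hepos) as [c [Hc Hbase]].
  exists c. split; [exact Hc|].
  intros n; induction n as [n IH] using (well_founded_induction lt_wf); intros Hqn.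
  destruct (le_lt_dec n N) as [HnN|HNn]; [apply Hbase; lia|].
  destruct (Hsplit n) as [ns [Hns Hsum]].
  apply (superadditive_step c n ns); auto; [lia | |].
  - assert (INR N < INR n) by (apply lt_INR; lia).
    replace ((1 + a) * INR q * INR M) with ((1 + a) * INR q * INR M / a * a) by (field; lra).
    nra.
  - intros j Hj Hq. apply IH; [exact (superadditive_parts_lt n ns Hqn Hns Hsum j Hj) | exact Hq].
Qed.

End SuperadditiveGrowth.

Fixpoint nat_of_bits (b : nat -> bool) (i : nat) : nat :=
  match i with
  | O => O
  | S i' => (nat_of_bits b i' + Nat.b2n (b i') * 2 ^ i')%nat
  end.

Lemma nat_of_bits_lt (b : nat -> bool) (i : nat) : (nat_of_bits b i < 2 ^ i)%nat.
Proof. induction i; simpl; [lia | destruct (b i); simpl; lia]. Qed.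

Lemma testbit_nat_of_bits (b : nat -> bool) (i k : nat) :
  (k < i)%nat -> Nat.testbit (nat_of_bits b i) k = b k.
Proof.
  induction i as [|i IH]; simpl; intros Hk; [lia|].
  pose proof (nat_of_bits_lt b i) as Hlt.
  destruct (Nat.eq_dec k i) as [->|Hki].
  - apply Nat.testbit_unique with (l := nat_of_bits b i) (h := 0%nat); [exact Hlt | lia].
  - rewrite <- (Nat.mod_pow2_bits_low _ i k) by lia.
    rewrite Nat.Div0.mod_add, Nat.mod_small by exact Hlt. apply IH; lia.
Qed.

Lemma low_bits_inj (d j k : nat) : (j < 2 ^ d)%nat -> (k < 2 ^ d)%nat ->
  (forall i, (i < d)%nat -> Nat.testbit j i = Nat.testbit k i) -> j = k.
Proof.
  intros Hj Hk Hbits. apply Nat.bits_inj. intros i.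
  rewrite <- (Nat.mod_small j (2 ^ d)), <- (Nat.mod_small k (2 ^ d)) by assumption.
  destruct (le_lt_dec d i).
  - rewrite !Nat.mod_pow2_bits_high by lia. reflexivity.
  - rewrite !Nat.mod_pow2_bits_low by lia. apply Hbits; lia.
Qed.

Definition half_subcube_corner (j : nat) : point :=
  fun i => if Nat.testbit j i then 1 / 2 else 0.

Lemma unit_cube_halving (d : nat) :
  cube_partition d (2 ^ d) half_subcube_corner (fun _ => 1 / 2) (fun _ => 0) 1.
Proof.
  unfold half_subcube_corner.
  split; [intros; lra | split].
  - intros j k x Hj Hk Hjk [Hxj Hxk]. apply Hjk, (low_bits_inj d); auto.
    intros i Hi. specialize (Hxj i Hi); specialize (Hxk i Hi). cbv beta in *.
    destruct (Nat.testbit j i), (Nat.testbit k i); auto; lra.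
  - intros x. split.
    + intros Hx.
      set (b := fun i => if Rlt_dec (x i) (1 / 2) then false else true).
      exists (nat_of_bits b d). split; [apply nat_of_bits_lt|].
      intros i Hi. specialize (Hx i Hi). cbv beta.
      rewrite testbit_nat_of_bits by exact Hi.
      unfold b. destruct (Rlt_dec (x i) (1 / 2)); lra.
    + intros [j [_ Hx]] i Hi. specialize (Hx i Hi). cbv beta in Hx.
      destruct (Nat.testbit j i); lra.
Qed.

Lemma scaling_translation_reduction (F : point -> R -> R) (t : R) (a0 : point) :
  (forall a l lam, 0 < l -> 0 < lam ->
     F (dil_corner a l lam) (lam * l) = Rpower lam t * F a l) ->
  (forall a l x, 0 < l -> F (tr_corner a x) l = F a l) ->
  forall a l, 0 < l -> F a l = Rpower l t * F a0 1.
Proof.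
  intros Hdil Htr a l Hl.
  pose proof (Hdil a0 1 l Rlt_0_1 Hl) as Hd. rewrite Rmult_1_r in Hd.
  rewrite <- Hd, <- (Htr (dil_corner a0 1 l) l (fun i => a i - dil_corner a0 1 l i) Hl).
  f_equal. apply functional_extensionality. intros i. unfold tr_corner. ring.
Qed.

Theorem mainTheorem3 (d : nat) (s : R) (E : nat -> point -> R -> R) (q : nat) :
  (1 <= d)%nat -> 0 < s ->
  (forall n a l, 0 < l -> 0 <= E n a l) ->
  (* (i) scaling *)
  (forall n a l lam, 0 < l -> 0 < lam ->
     E n (dil_corner a l lam) (lam * l) = Rpower lam (- (2 * s)) * E n a l) ->
  (* (ii) translation invariance *)
  (forall n a l x, 0 < l -> E n (tr_corner a x) l = E n a l) ->
  (* (iii) superadditivity over partitions into cubes *)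
  (forall n J as_ ls a l, 0 < l -> cube_partition d J as_ ls a l ->
     exists ns : nat -> nat, nsum ns J = n /\
       rsum (fun j => E (ns j) (as_ j) (ls j)) J <= E n a l) ->
  (* (iv) positivity for n >= q *)
  (forall n a l, (q <= n)%nat -> 0 < l -> 0 < E n a l) ->
  exists C, 0 < C /\
    forall n a l, (q <= n)%nat -> 0 < l ->
      C * Rpower (l ^ d) (- (2 * s / INR d)) * (INR n * Rpower (INR n) (2 * s / INR d))
        <= E n a l.
Proof.
  intros Hd Hs Hnn Hdil Htr Hpart Hpos.
  set (e := fun n => E n (fun _ => 0) 1).
  set (alpha := 2 * s / INR d).
  set (K := Rpower (/ 2) (- (2 * s))).
  assert (Hscale : forall n a l, 0 < l -> E n a l = Rpower l (- (2 * s)) * e n)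
    by (intros n; apply scaling_translation_reduction; auto).
  assert (Hdr : 0 < INR d) by (apply lt_0_INR; lia).
  assert (Hs_alpha : 2 * s = INR d * alpha) by (unfold alpha; field; lra).
  destruct (superadditive_growth e q (2 ^ d) alpha K) as [c [Hc Hgrowth]].
  - unfold alpha. apply Rdiv_lt_0_compat; lra.
  - pose proof (Nat.pow_nonzero 2 d ltac:(lia)). lia.
  - apply Rpower_inv_opp_gt_1; lra.
  - intros x Hx. unfold K. rewrite pow_INR, Hs_alpha.
    apply Rpower_inv_scaling; [simpl; lra | exact Hx].
  - intros n. apply Hnn; lra.
  - intros n Hn. apply Hpos; [exact Hn | lra].
  - intros n.
    destruct (Hpart n (2 ^ d)%nat half_subcube_corner (fun _ => 1 / 2) (fun _ => 0) 1
                Rlt_0_1 (unit_cube_halving d)) as [ns [Hns Hsum]].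
    exists ns. split; [exact Hns|]. rewrite <- rsum_scal.
    eapply Rle_trans; [apply rsum_le; intros j _ | exact Hsum]. cbv beta.
    rewrite (Hscale _ _ (1 / 2)) by lra. unfold K, Rdiv. rewrite Rmult_1_l. lra.
  - exists c. split; [exact Hc|]. intros n a l Hn Hl.
    rewrite (Hscale n a l Hl), <- (Rpower_pow d l Hl), Rpower_mult.
    replace (INR d * - alpha) with (- (2 * s)) by lra.
    pose proof (Hgrowth n Hn).
    assert (0 < Rpower l (- (2 * s))) by apply exp_pos.
    fold e. nra.
Qed.
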